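(* Let $\mathcal{F}_0$ denote one of $\mathcal{F}_{\ell,1}$, $\mathcal{F}_{\ell,1}^{loc}$ or $\mathcal{F}_{\ell,1}^{bd}$. The center $\mathcal{Z}(\mathcal{F}_0)$ coincides with the set of all $u\in\mathcal{F}_0$ such that $u(\mathbf{X})$ is a scalar multiple of the unit matrix for every irreducible $\ell$-tuple $\mathbf{X}\in\mathbb{M}^{(\ell)}$.
   Context: $\mathbb{M}_n$: complex $n\times n$ matrices, $\mathbb{U}_n$ unitary group, $\mathbb{M}=\bigsqcup_n\mathbb{M}_n$, $\mathbb{M}^{(\ell)}=\bigsqcup_n\mathbb{M}_n^\ell$. For $\mathbf{X}=(X_1,\dots,X_\ell)\in\mathbb{M}_n^\ell$: $d(\mathbf{X})=n$, $\|\mathbf{X}\|=\max_k\|X_k\|$, $U.\mathbf{X}=(UX_kU^{-1})_k$, $\mathbf{A}\oplus\mathbf{B}=(A_k\oplus B_k)_k$. $\mathbf{X}$ is irreducible if it is not of the form $U.(\mathbf{A}\oplus\mathbf{B})$ with $U\in\mathbb{U}_{d(\mathbf{X})}$. A function $f:\mathbb{M}^{(\ell)}\to\mathbb{M}$ is compatible if $d(f(\mathbf{X}))=d(\mathbf{X})$ and $f(U.(\bigoplus_{j=1}^s\mathbf{X}_j))=U.(\bigoplus_j f(\mathbf{X}_j))$ for all finite systems $\mathbf{X}_j$ and $U\in\mathbb{U}_N$, $N=\sum_j d(\mathbf{X}_j)$. $\mathcal{F}_{\ell,1}$ is the unital $*$-algebra (pointwise operations) of compatible Borel functions $\mathbb{M}^{(\ell)}\to\mathbb{M}$;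 $\mathcal{F}^{bd}_{\ell,1}$, $\mathcal{F}^{loc}_{\ell,1}$ its subalgebras of bounded, resp. locally bounded (bounded on each $\{\|\mathbf{X}\|\le R\}$), functions. *)

From HB Require Import structures.
From mathcomp Require Import all_boot all_order all_algebra.
From mathcomp Require Import complex.
From mathcomp Require Import all_classical all_reals all_analysis.

Set Implicit Arguments.
Unset Strict Implicit.
Unset Printing Implicit Defensive.

Import Order.TTheory GRing.Theory Num.Theory numFieldTopology.Exports.
Local Open Scope ring_scope.
Local Open Scope classical_set_scope.

(* A function M^(l) -> M preserving dimension is a dependent family          *)

Definition mxtuple (R : realType) (l n : nat) := 'I_l -> 'M[R[i]]_n.

Definition ncfun (R : realType) (l : nat) :=
  forall n : nat, mxtuple R l n -> 'M[R[i]]_n.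

Definition adjmx (R : realType) (m n : nat) (A : 'M[R[i]]_(m, n)) : 'M[R[i]]_(n, m) :=
  (map_mx Num.conj A)^T.

Definition unitarymx (R : realType) (n : nat) (U : 'M[R[i]]_n) : Prop :=
  adjmx U *m U = 1%:M /\ U *m adjmx U = 1%:M.

Definition mxact (R : realType) (l n : nat) (U : 'M[R[i]]_n) (X : mxtuple R l n)
  : mxtuple R l n := fun k => U *m X k *m invmx U.

Definition mxtuple_dsum (R : realType) (l s : nat) (p : 'I_s -> nat)
  (X : forall j : 'I_s, mxtuple R l (p j)) : mxtuple R l (\sum_(j < s) p j) :=
  fun k => mxdiag (fun j => X j k).

Definition compatible (R : realType) (l : nat) (f : ncfun R l) : Prop :=
  forall (s : nat) (p : 'I_s -> nat) (X : forall j : 'I_s, mxtuple R l (p j))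
         (U : 'M[R[i]]_(\sum_(j < s) p j)),
    unitarymx U ->
    f _ (mxact U (mxtuple_dsum X)) = U *m mxdiag (fun j => f (p j) (X j)) *m invmx U.

(* Borel structure: M_n^l = C^(l n^2) is identified with R^(2 l n^2) through *)
(* the real and imaginary parts of the entries.                              *)
Definition reim (R : realType) (m n : nat) (A : 'M[R[i]]_(m, n)) : 'M[R]_(m, n + n) :=
  row_mx (map_mx (@complex.Re R) A) (map_mx (@complex.Im R) A).

Definition realify (R : realType) (l n : nat) (X : mxtuple R l n) : 'M[R]_(l, n * (n + n)) :=
  \matrix_(k < l, j < n * (n + n)) mxvec (reim (X k)) 0 j.

Definition borel_set (T : topologicalType) (S : set T) : Prop :=
  <<s [set V : set T | open V] >> S.

Definition borel_fun (R : realType) (l n : nat) (g : mxtuple R l n -> 'M[R[i]]_n) : Prop :=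
  forall V : set 'M[R]_(n, n + n), open V ->
    exists B : set 'M[R]_(l, n * (n + n)),
      borel_set B /\ (fun X => reim (g X)) @^-1` V = (@realify R l n) @^-1` B.

Definition opnorm_le (R : realType) (n : nat) (A : 'M[R[i]]_n) (c : R) : Prop :=
  0 <= c /\
  forall v : 'cV[R[i]]_n,
    \sum_(i < n) `|(A *m v) i 0| ^+ 2 <= ((c ^+ 2)%:C)%C * \sum_(i < n) `|v i 0| ^+ 2.

Definition tuple_norm_le (R : realType) (l n : nat) (X : mxtuple R l n) (c : R) : Prop :=
  0 <= c /\ forall k : 'I_l, opnorm_le (X k) c.

Inductive Fkind := F_all | F_loc | F_bd.

Definition in_F (R : realType) (l : nat) (K : Fkind) (f : ncfun R l) : Prop :=
  compatible f /\ (forall n, borel_fun (f n)) /\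
  match K with
  | F_all => True
  | F_loc => forall r : R, 0 <= r -> exists c : R,
               forall n (X : mxtuple R l n), tuple_norm_le X r -> opnorm_le (f n X) c
  | F_bd => exists c : R, forall n (X : mxtuple R l n), opnorm_le (f n X) c
  end.

Definition irreducible (R : realType) (l n : nat) (X : mxtuple R l n) : Prop :=
  ~ exists (a b : nat) (A : mxtuple R l a) (B : mxtuple R l b)
           (U : 'M[R[i]]_(a + b)) (H : a + b = n),
      [/\ (0 < a)%N, (0 < b)%N, unitarymx U &
          X = fun k => castmx (H, H) (U *m block_mx (A k) 0 0 (B k) *m invmx U)].

Definition in_center (R : realType) (l : nat) (K : Fkind) (u : ncfun R l) : Prop :=
  in_F K u /\
  forall v : ncfun R l, in_F K v ->
    forall n (X : mxtuple R l n), u n X *m v n X = v n X *m u n X.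

From HB Require Import structures.
From mathcomp Require Import all_boot all_order all_algebra.
From mathcomp Require Import complex.
From mathcomp Require Import all_classical all_reals all_analysis.
From mathcomp Require sesquilinear spectral.

Set Implicit Arguments.
Unset Strict Implicit.
Unset Printing Implicit Defensive.

Import Order.TTheory GRing.Theory Num.Theory numFieldTopology.Exports.
Local Open Scope ring_scope.

(* If u is central, it commutes in particular with the resolvents
   (H + i)^-1 of the two Hermitian parts H of each coordinate X_k: these
   are compatible, continuous (hence Borel) and bounded by 1, so they lie
   in each of the three algebras.  Hence u(X) commutes with every X_k and
   X_k^*, and when X is irreducible an eigenspace of u(X) and its orthogonal
   complement would reduce X unless the eigenspace is everything, so u(X) is
   scalar.  Conversely, if u is scalar on irreducible tuples, a reducible X
   is unitarily a direct sum of two tuples of smaller dimension, compatibility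
   turns u(X) v(X) = v(X) u(X) into the same identity on both summands, and
   induction on the dimension concludes. *)

Section ComplexContinuity.
Variables (R : realType) (T : topologicalType).
Local Notation C := R[i].

Lemma continuous_mx m n (g : T -> 'M[R]_(m, n)) :
  (forall i j, continuous (fun x => g x i j)) -> continuous g.
Proof.
move=> gc x; apply/cvgrPdist_le => e e0; near=> y.
rewrite /Num.Def.normr/= mx_normrE (bigmax_le _ (ltW e0))//= => -[i j] _.
rewrite !mxE/=; move: i j; near: y.
apply: filter_forall => i; apply: filter_forall => j.
exact: ((cvgrPdist_le _ _).1 (gc i j x)).
Unshelve. all: by end_near. Qed.

(* R[i] carries no topology here, so continuity of a complex-valued function
   is expressed through its real and imaginary parts. *)
Definition ccontinuous (F : T -> C) :=
  continuous (fun x => complex.Re (F x)) /\ continuous (fun x => complex.Im (F x)).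

Lemma ccontinuous_cst (c : C) : ccontinuous (fun=> c).
Proof. by split; apply: cst_continuous. Qed.

Lemma ccontinuousD F G :
  ccontinuous F -> ccontinuous G -> ccontinuous (fun x => F x + G x).
Proof.
move=> [F1 F2] [G1 G2]; rewrite /ccontinuous.
have -> : (fun x => complex.Re (F x + G x)) =
    (fun x => complex.Re (F x) + complex.Re (G x)).
  by apply: funext => x; case: (F x) (G x) => [a b] [c d].
have -> : (fun x => complex.Im (F x + G x)) =
    (fun x => complex.Im (F x) + complex.Im (G x)).
  by apply: funext => x; case: (F x) (G x) => [a b] [c d].
by split=> x; [exact: continuousD (F1 x) (G1 x) | exact: continuousD (F2 x) (G2 x)].
Qed.

Lemma ccontinuousN F : ccontinuous F -> ccontinuous (fun x => - F x).
Proof.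
move=> [F1 F2]; rewrite /ccontinuous.
have -> : (fun x => complex.Re (- F x)) = (fun x => - complex.Re (F x)).
  by apply: funext => x; case: (F x).
have -> : (fun x => complex.Im (- F x)) = (fun x => - complex.Im (F x)).
  by apply: funext => x; case: (F x).
by split=> x; [exact: continuousN (F1 x) | exact: continuousN (F2 x)].
Qed.

Lemma ccontinuousM F G :
  ccontinuous F -> ccontinuous G -> ccontinuous (fun x => F x * G x).
Proof.
move=> [F1 F2] [G1 G2]; rewrite /ccontinuous.
have -> : (fun x => complex.Re (F x * G x)) = (fun x =>
    complex.Re (F x) * complex.Re (G x) - complex.Im (F x) * complex.Im (G x)).
  by apply: funext => x; case: (F x) (G x) => [a b] [c d].
have -> : (fun x => complex.Im (F x * G x)) = (fun x =>
    complex.Re (F x) * complex.Im (G x) + complex.Im (F x) * complex.Re (G x)).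
  by apply: funext => x; case: (F x) (G x) => [a b] [c d].
split=> x; first exact: continuousB (continuousM (F1 x) (G1 x)) (continuousM (F2 x) (G2 x)).
exact: continuousD (continuousM (F1 x) (G2 x)) (continuousM (F2 x) (G1 x)).
Qed.

Lemma ccontinuousJ F : ccontinuous F -> ccontinuous (fun x => Num.conj (F x)).
Proof.
move=> [F1 F2]; rewrite /ccontinuous.
have -> : (fun x => complex.Re (Num.conj (F x))) = (fun x => complex.Re (F x)).
  by apply: funext => x; case: (F x).
have -> : (fun x => complex.Im (Num.conj (F x))) = (fun x => - complex.Im (F x)).
  by apply: funext => x; case: (F x).
by split=> // x; exact: continuousN (F2 x).
Qed.

Lemma ccontinuousV F :
  (forall x, F x != 0) -> ccontinuous F -> ccontinuous (fun x => (F x)^-1).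
Proof.
move=> Fn0 [F1 F2]; rewrite /ccontinuous.
pose d x := complex.Re (F x) ^+ 2 + complex.Im (F x) ^+ 2.
have dn0 x : d x != 0.
  rewrite /d; have := Fn0 x; case: (F x) => a b /=; apply: contra.
  by rewrite paddr_eq0 ?sqr_ge0 // !sqrf_eq0 => /andP[/eqP -> /eqP ->].
have dc : continuous d.
  by move=> x; exact: continuousD (continuousM (F1 x) (F1 x)) (continuousM (F2 x) (F2 x)).
have -> : (fun x => complex.Re ((F x)^-1)) =
    (fun x => complex.Re (F x) * (d x)^-1).
  by apply: funext => x; rewrite /d; case: (F x).
have -> : (fun x => complex.Im ((F x)^-1)) =
    (fun x => - complex.Im (F x) * (d x)^-1).
  by apply: funext => x; rewrite /d; case: (F x) => a b /=; rewrite mulNr.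
split=> x; first exact: continuousM (F1 x) (continuousV (dn0 x) (dc x)).
exact: continuousM (continuousN (F2 x)) (continuousV (dn0 x) (dc x)).
Qed.

Lemma ccontinuous_sum (I : Type) (r : seq I) (P : pred I) (F : I -> T -> C) :
  (forall i, ccontinuous (F i)) -> ccontinuous (fun x => \sum_(i <- r | P i) F i x).
Proof.
move=> Fc; elim: r => [|a r IHr].
  by under eq_fun do rewrite big_nil; apply: ccontinuous_cst.
under eq_fun do rewrite big_cons.
by case: (P a) => //; apply: ccontinuousD.
Qed.

Lemma ccontinuous_prod (I : Type) (r : seq I) (P : pred I) (F : I -> T -> C) :
  (forall i, ccontinuous (F i)) -> ccontinuous (fun x => \prod_(i <- r | P i) F i x).
Proof.
move=> Fc; elim: r => [|a r IHr].
  by under eq_fun do rewrite big_nil; apply: ccontinuous_cst.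
under eq_fun do rewrite big_cons.
by case: (P a) => //; apply: ccontinuousM.
Qed.

Definition mx_ccontinuous m n (F : T -> 'M[C]_(m, n)) :=
  forall i j, ccontinuous (fun x => F x i j).

Lemma mx_ccontinuous_cst m n (A : 'M[C]_(m, n)) : mx_ccontinuous (fun=> A).
Proof. by move=> i j; apply: ccontinuous_cst. Qed.

Lemma mx_ccontinuousD m n (F G : T -> 'M[C]_(m, n)) :
  mx_ccontinuous F -> mx_ccontinuous G -> mx_ccontinuous (fun x => F x + G x).
Proof. by move=> Fc Gc i j; under eq_fun do rewrite mxE; apply: ccontinuousD. Qed.

Lemma mx_ccontinuousN m n (F : T -> 'M[C]_(m, n)) :
  mx_ccontinuous F -> mx_ccontinuous (fun x => - F x).
Proof. by move=> Fc i j; under eq_fun do rewrite mxE; apply: ccontinuousN. Qed.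

Lemma mx_ccontinuousZ m n (c : C) (F : T -> 'M[C]_(m, n)) :
  mx_ccontinuous F -> mx_ccontinuous (fun x => c *: F x).
Proof.
move=> Fc i j; under eq_fun do rewrite mxE.
by apply: ccontinuousM => //; apply: ccontinuous_cst.
Qed.

Lemma mx_ccontinuous_adj m n (F : T -> 'M[C]_(m, n)) :
  mx_ccontinuous F -> mx_ccontinuous (fun x => adjmx (F x)).
Proof. by move=> Fc i j; under eq_fun do rewrite !mxE; apply: ccontinuousJ. Qed.

Lemma ccontinuous_det n (F : T -> 'M[C]_n) :
  mx_ccontinuous F -> ccontinuous (fun x => \det (F x)).
Proof.
move=> Fc; apply: ccontinuous_sum => s.
apply: ccontinuousM; first exact: ccontinuous_cst.
exact: ccontinuous_prod.
Qed.

Lemma mx_ccontinuous_adjugate n (F : T -> 'M[C]_n) :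
  mx_ccontinuous F -> mx_ccontinuous (fun x => \adj (F x)).
Proof.
move=> Fc i j; under eq_fun do rewrite mxE /cofactor.
apply: ccontinuousM; first exact: ccontinuous_cst.
by apply: ccontinuous_det => a b; under eq_fun do rewrite !mxE; apply: Fc.
Qed.

Lemma mx_ccontinuous_inv n (F : T -> 'M[C]_n) :
  (forall x, F x \in unitmx) -> mx_ccontinuous F ->
  mx_ccontinuous (fun x => invmx (F x)).
Proof.
move=> Fu Fc.
have -> : (fun x => invmx (F x)) = (fun x => (\det (F x))^-1 *: \adj (F x)).
  by apply: funext => x; rewrite /invmx Fu.
move=> i j; under eq_fun do rewrite mxE.
apply: ccontinuousM; last exact: mx_ccontinuous_adjugate.
apply: ccontinuousV; last exact: ccontinuous_det.
by move=> x; rewrite -unitfE -unitmxE.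
Qed.

End ComplexContinuity.

Section BorelOfContinuous.
Local Open Scope classical_set_scope.
Variables (R : realType) (l n : nat).
Local Notation C := R[i].

Definition unrealify (M : 'M[R]_(l, n * (n + n))) : mxtuple R l n :=
  fun k => \matrix_(i, j) ((vec_mx (row k M)) i (lshift n j) +i*
                           (vec_mx (row k M)) i (rshift n j))%C.

Lemma realifyK : cancel (@realify R l n) unrealify.
Proof.
move=> X; apply: funext => k; apply/matrixP => i j; rewrite /unrealify.
have -> : row k (realify X) = mxvec (reim (X k)) by apply/rowP => a; rewrite !mxE.
rewrite mxE mxvecK /reim row_mxEl row_mxEr !mxE.
by case: (X k i j).
Qed.

Lemma mx_ccontinuous_unrealify k :
  mx_ccontinuous (fun M : 'M[R]_(l, n * (n + n)) => unrealify M k).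
Proof. by move=> i j; split=> M; under eq_fun do rewrite !mxE /=; apply: coord_continuous. Qed.

Lemma ccontinuous_borel_fun (g : mxtuple R l n -> 'M[C]_n) :
  mx_ccontinuous (fun M : 'M[R]_(l, n * (n + n)) => g (unrealify M)) -> borel_fun g.
Proof.
move=> gc V oV.
pose h (M : 'M[R]_(l, n * (n + n))) := reim (g (unrealify M)).
exists (h @^-1` V); split.
  apply: sub_gen_smallest; apply: (continuousP _).1 => //.
  apply: continuous_mx => i j; rewrite /h /reim -[j]splitK.
  case: (fintype.split j) => j' /=.
    by under eq_fun do rewrite row_mxEl mxE; apply: (gc i j').1.
  by under eq_fun do rewrite row_mxEr mxE; apply: (gc i j').2.
by apply: funext => X; rewrite /h /= realifyK.
Qed.

End BorelOfContinuous.

Definition dims2 (a b : nat) : 'I_2 -> nat := fun j => if j == ord0 then a else b.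

Definition select2 (F : nat -> Type) a b (x : F a) (y : F b) j : F (dims2 a b j) :=
  if j == ord0 as c return F (if c then a else b) then x else y.
Arguments select2 F {a b} x y j.

Section BlockDiagonal.
Variable R : pzRingType.

Lemma mul_mxdiag p (p_ : 'I_p -> nat) (D E : forall i, 'M[R]_(p_ i)) :
  mxdiag D *m mxdiag E = mxdiag (fun i => D i *m E i).
Proof.
rewrite {2}/mxdiag mul_mxdiag_mxblock /mxdiag; apply: eq_mxblock => i j.
by case: eqP => [<-|_]; rewrite ?mulmx0 ?conform_mx_id.
Qed.

Lemma map_mxdiag p (p_ : 'I_p -> nat) (f : R -> R) (D : forall i, 'M[R]_(p_ i)) :
  f 0 = 0 -> map_mx f (mxdiag D) = mxdiag (fun i => map_mx f (D i)).
Proof.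
move=> f0; rewrite /mxdiag.
have -> : map_mx f (mxblock (fun i j =>
      if i == j then conform_mx 0 (D i) else (0 : 'M[R]_(p_ i, p_ j)))) =
    mxblock (fun i j => map_mx f
      (if i == j then conform_mx 0 (D i) else (0 : 'M[R]_(p_ i, p_ j)))).
  by apply/matrixP => a b; rewrite !mxE.
apply: eq_mxblock => i j.
case: eqP => [<-|_]; first by rewrite !conform_mx_id.
by apply/matrixP => a b; rewrite !mxE f0.
Qed.

Lemma scale_mxdiag p (p_ : 'I_p -> nat) (c : R) (D : forall i, 'M[R]_(p_ i)) :
  c *: mxdiag D = mxdiag (fun i => c *: D i).
Proof.
rewrite -mul_scalar_mx -(mxdiagZ (p_ := p_)) mul_mxdiag.
by apply: eq_mxdiag => i; rewrite mul_scalar_mx.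
Qed.

Lemma castmx_mul n n' (e : n = n') (A B : 'M[R]_n) :
  castmx (e, e) (A *m B) = castmx (e, e) A *m castmx (e, e) B.
Proof. by case: n' / e; rewrite !castmx_id. Qed.

Lemma castmx_block_mx_r a b b' (eb : b = b') (e : (a + b = a + b')%N)
    (A : 'M[R]_a) (B : 'M[R]_b) :
  castmx (e, e) (block_mx A 0 0 B) = block_mx A 0 0 (castmx (eb, eb) B).
Proof. by case: b' / eb in e *; rewrite (eq_irrelevance e (erefl _)) !castmx_id. Qed.

Lemma castmx_block_mx_0 a b (A : 'M[R]_a) (Z : 'M[R]_b) (b0 : b = 0%N) s
    (e : (a + b = s)%N) (ea : a = s) :
  castmx (e, e) (block_mx A 0 0 Z) = castmx (ea, ea) A.
Proof.
case: s / ea in e *; subst b; rewrite castmx_id; apply/matrixP => i j.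
rewrite castmxE.
have -> : cast_ord (esym e) i = lshift 0 i by apply: val_inj.
have -> : cast_ord (esym e) j = lshift 0 j by apply: val_inj.
by rewrite block_mxEul.
Qed.

Lemma dims2_sum a b : (a + b = \sum_(j < 2) dims2 a b j)%N.
Proof. by rewrite !big_ord_recl big_ord0 addn0. Qed.

Lemma block_mx_mxdiag2 a b (A : 'M[R]_a) (B : 'M[R]_b)
    (e : (a + b = \sum_(j < 2) dims2 a b j)%N) :
  castmx (e, e) (block_mx A 0 0 B) = mxdiag (select2 (fun m => 'M[R]_m) A B).
Proof.
rewrite mxdiag_recl mxdiag_recl.
have e0 : (\sum_(i < 0) dims2 a b (lift ord0 (lift ord0 i)) = 0)%N by rewrite big_ord0.
have eb : b = (\sum_(i < 1) dims2 a b (lift ord0 i))%N.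
  by rewrite big_ord_recl big_ord0 addn0.
rewrite (castmx_block_mx_0 _ _ e0 _ eb).
have e' : (a + b = a + \sum_(i < 1) dims2 a b (lift ord0 i))%N by rewrite -eb.
rewrite -(castmx_block_mx_r eb e') castmx_comp.
by congr castmx; congr pair; apply: eq_irrelevance.
Qed.

End BlockDiagonal.

Lemma castmx_invmx (R : comUnitRingType) n n' (e : n = n') (A : 'M[R]_n) :
  castmx (e, e) (invmx A) = invmx (castmx (e, e) A).
Proof. by case: n' / e; rewrite !castmx_id. Qed.

Section ConjugateTranspose.
Variable R : realType.
Local Notation C := R[i].

Lemma adjmx_map_tr m n (A : 'M[C]_(m, n)) : adjmx A = map_mx Num.conj A^T.
Proof. by apply/matrixP => i j; rewrite !mxE. Qed.

Lemma adjmxK m n (A : 'M[C]_(m, n)) : adjmx (adjmx A) = A.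
Proof. by apply/matrixP => i j; rewrite !mxE conjCK. Qed.

Lemma adjmx0 m n : adjmx (0 : 'M[C]_(m, n)) = 0.
Proof. by apply/matrixP => i j; rewrite !mxE rmorph0. Qed.

Lemma adjmxD m n (A B : 'M[C]_(m, n)) : adjmx (A + B) = adjmx A + adjmx B.
Proof. by apply/matrixP => i j; rewrite !mxE rmorphD. Qed.

Lemma adjmxB m n (A B : 'M[C]_(m, n)) : adjmx (A - B) = adjmx A - adjmx B.
Proof. by apply/matrixP => i j; rewrite !mxE rmorphB. Qed.

Lemma adjmxZ m n c (A : 'M[C]_(m, n)) : adjmx (c *: A) = Num.conj c *: adjmx A.
Proof. by apply/matrixP => i j; rewrite !mxE rmorphM. Qed.

Lemma adjmxM m n p (A : 'M[C]_(m, n)) (B : 'M[C]_(n, p)) :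
  adjmx (A *m B) = adjmx B *m adjmx A.
Proof.
apply/matrixP => i j; rewrite !mxE rmorph_sum; apply: eq_bigr => k _.
by rewrite !mxE rmorphM mulrC.
Qed.

Lemma adjmx_scalar n c : adjmx (c%:M : 'M[C]_n) = (Num.conj c)%:M.
Proof. by apply/matrixP => i j; rewrite !mxE rmorphMn eq_sym. Qed.

Lemma adjmx_mxdiag s (p : 'I_s -> nat) (D : forall i, 'M[C]_(p i)) :
  adjmx (mxdiag D) = mxdiag (fun i => adjmx (D i)).
Proof. by rewrite /adjmx map_mxdiag ?rmorph0 // tr_mxdiag. Qed.

Lemma adjmx_col m1 m2 n (A : 'M[C]_(m1, n)) (B : 'M[C]_(m2, n)) :
  adjmx (col_mx A B) = row_mx (adjmx A) (adjmx B).
Proof. by rewrite /adjmx map_col_mx tr_col_mx. Qed.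

Lemma mulmx1_invmx n (P Q : 'M[C]_n) : P *m Q = 1%:M -> invmx P = Q.
Proof.
move=> PQ; have [Pu _] := mulmx1_unit PQ.
by rewrite -[invmx P]mulmx1 -PQ mulmxA mulVmx // mul1mx.
Qed.

Lemma unitary_invmx n (U : 'M[C]_n) : unitarymx U -> invmx U = adjmx U.
Proof. by move=> [_ UU']; apply: mulmx1_invmx. Qed.

Lemma unitary_unitmx n (U : 'M[C]_n) : unitarymx U -> U \in unitmx.
Proof. by move=> [_ UU']; have [] := mulmx1_unit UU'. Qed.

Lemma castmx_unitary n n' (e : n = n') (U : 'M[C]_n) :
  unitarymx U -> unitarymx (castmx (e, e) U).
Proof. by case: n' / e; rewrite castmx_id. Qed.

Definition sqnorm n (v : 'cV[C]_n) := (adjmx v *m v) 0 0.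

Lemma sqnormE n (v : 'cV[C]_n) : sqnorm v = \sum_i `|v i 0| ^+ 2.
Proof. by rewrite /sqnorm mxE; apply: eq_bigr => i _; rewrite !mxE normCK mulrC. Qed.

Lemma sqnorm_ge0 n (v : 'cV[C]_n) : 0 <= sqnorm v.
Proof. by rewrite sqnormE sumr_ge0 // => i _; rewrite exprn_ge0. Qed.

Lemma sqnorm_eq0 n (v : 'cV[C]_n) : sqnorm v = 0 -> v = 0.
Proof.
rewrite sqnormE => /eqP; rewrite psumr_eq0 => [/allP v0|i _]; last by rewrite exprn_ge0.
apply/matrixP => i j; rewrite ord1 mxE.
by apply/eqP; rewrite -normr_eq0 -sqrf_eq0; apply: v0; rewrite mem_index_enum.
Qed.

End ConjugateTranspose.

Section Resolvent.
Variable R : realType.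
Local Notation C := R[i].

Definition resolvent n (G : 'M[C]_n) := invmx (G + 'i%:M).

Section Hermitian.
Variables (n : nat) (G : 'M[C]_n).
Hypothesis G_herm : adjmx G = G.

Lemma sqnorm_le_mulmx_shift (w : 'cV[C]_n) : sqnorm w <= sqnorm ((G + 'i%:M) *m w).
Proof.
have shift_adj_mul : adjmx (G + 'i%:M) *m (G + 'i%:M) = G *m G + 1%:M.
  rewrite adjmxD G_herm adjmx_scalar conjCi mulmxDl !mulmxDr mul_mx_scalar.
  rewrite !mul_scalar_mx scale_scalar_mx mulNr -expr2 sqrCi opprK scaleNr.
  by rewrite addrA addrK.
rewrite /sqnorm adjmxM mulmxA -[adjmx w *m _ *m _]mulmxA shift_adj_mul.
have -> : adjmx w *m (G *m G + 1%:M) *m w =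
    adjmx (G *m w) *m (G *m w) + adjmx w *m w.
  by rewrite mulmxDr mulmxDl mulmx1 adjmxM G_herm !mulmxA.
by rewrite [X in _ <= X]mxE lerDr; apply: sqnorm_ge0.
Qed.

Lemma shift_unitmx : G + 'i%:M \in unitmx.
Proof.
apply: contraT => nu.
have : ~~ row_free (G + 'i%:M)^T by rewrite row_free_unit unitmx_tr.
rewrite -kermx_eq0 => /rowV0Pn [x /sub_kermxP xG xn0].
have Gx : (G + 'i%:M) *m x^T = 0 by rewrite -[LHS]trmxK trmx_mul trmxK xG trmx0.
have := sqnorm_le_mulmx_shift x^T; rewrite Gx.
have -> : sqnorm (0 : 'cV[C]_n) = 0 by rewrite /sqnorm mulmx0 mxE.
move=> x0; have /sqnorm_eq0/(congr1 trmx) : sqnorm x^T = 0.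
  by apply/eqP; rewrite eq_le x0 sqnorm_ge0.
by rewrite trmxK trmx0 => x_eq0; rewrite x_eq0 eqxx in xn0.
Qed.

Lemma resolvent_opnorm_le1 : opnorm_le (resolvent G) 1.
Proof.
split => // v; rewrite expr1n mul1r -!sqnormE.
have := sqnorm_le_mulmx_shift (resolvent G *m v).
by rewrite mulmxA mulmxV ?shift_unitmx // mul1mx.
Qed.

Lemma comm_resolvent (M : 'M[C]_n) :
  M *m resolvent G = resolvent G *m M -> M *m G = G *m M.
Proof.
move=> MG; have Gu := shift_unitmx.
have RG : resolvent G *m (G + 'i%:M) = 1%:M by rewrite mulVmx.
have GR : (G + 'i%:M) *m resolvent G = 1%:M by rewrite mulmxV.
have : (G + 'i%:M) *m M = M *m (G + 'i%:M).
  by rewrite -[_ *m M]mulmx1 -RG !mulmxA -(mulmxA _ M) MG mulmxA GR mul1mx.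
by rewrite mulmxDr mulmxDl scalar_mxC => /addIr.
Qed.

End Hermitian.

Lemma resolvent_unitary_conj n (U H : 'M[C]_n) : unitarymx U -> adjmx H = H ->
  resolvent (U *m H *m invmx U) = U *m resolvent H *m invmx U.
Proof.
move=> Uu Hh; rewrite /resolvent; apply: mulmx1_invmx.
have Uunit := unitary_unitmx Uu; have Hu := shift_unitmx Hh.
have -> : U *m H *m invmx U + 'i%:M = U *m (H + 'i%:M) *m invmx U.
  by rewrite mulmxDr mulmxDl mul_mx_scalar -scalemxAl mulmxV // scalemx1.
rewrite !mulmxA -[U *m _ *m _ *m U]mulmxA mulVmx // mulmx1.
by rewrite -[U *m _ *m _]mulmxA mulmxV // mulmx1 mulmxV.
Qed.

Lemma resolvent_mxdiag s (p : 'I_s -> nat) (D : forall i, 'M[C]_(p i)) :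
  (forall i, adjmx (D i) = D i) ->
  resolvent (mxdiag D) = mxdiag (fun i => resolvent (D i)).
Proof.
move=> Dh; rewrite /resolvent; apply: mulmx1_invmx.
rewrite -(mxdiagZ (p_ := p) 'i) -mxdiagD mul_mxdiag -(mxdiagZ (p_ := p) 1).
by apply: eq_mxdiag => i; rewrite mulmxV // shift_unitmx.
Qed.

Definition herm_part (b : bool) n (Z : 'M[C]_n) :=
  if b then Z + adjmx Z else 'i *: (Z - adjmx Z).

Lemma herm_part_adj b n (Z : 'M[C]_n) : adjmx (herm_part b Z) = herm_part b Z.
Proof.
case: b; first by rewrite adjmxD adjmxK addrC.
by rewrite adjmxZ adjmxB adjmxK conjCi scaleNr -scalerN opprB.
Qed.

Lemma herm_part_unitary_conj b n (U Z : 'M[C]_n) : unitarymx U ->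
  herm_part b (U *m Z *m invmx U) = U *m herm_part b Z *m invmx U.
Proof.
move=> Uu; rewrite unitary_invmx // /herm_part !adjmxM adjmxK mulmxA.
by case: b; rewrite ?(mulmxDr, mulmxDl) // -scalemxAr -scalemxAl mulmxBr mulmxBl.
Qed.

Lemma herm_part_mxdiag b s (p : 'I_s -> nat) (D : forall i, 'M[C]_(p i)) :
  herm_part b (mxdiag D) = mxdiag (fun i => herm_part b (D i)).
Proof.
rewrite /herm_part adjmx_mxdiag; case: b; first by rewrite mxdiagD.
by rewrite -mxdiagB scale_mxdiag.
Qed.

Lemma comm_herm_parts n (M Z : 'M[C]_n) :
  (forall b, M *m herm_part b Z = herm_part b Z *m M) ->
  M *m Z = Z *m M /\ M *m adjmx Z = adjmx Z *m M.
Proof.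
move=> MH.
have comm_comb (A B : 'M[C]_n) c d : M *m A = A *m M -> M *m B = B *m M ->
    M *m (c *: A + d *: B) = (c *: A + d *: B) *m M.
  by move=> MA MB; rewrite mulmxDr mulmxDl -!scalemxAr -!scalemxAl MA MB.
have Z_comb : Z = 2^-1 *: herm_part true Z + (- 'i / 2) *: herm_part false Z.
  have e : - 'i / 2 * 'i = 2^-1 :> C by rewrite mulrAC mulNr -expr2 sqrCi opprK mul1r.
  rewrite /herm_part scalerA e -scalerDr addrACA subrr addr0.
  by rewrite scalerDr -scalerDl -[2^-1]mul1r -splitr scale1r.
have Z'_comb : adjmx Z = 2^-1 *: herm_part true Z + ('i / 2) *: herm_part false Z.
  have e : 'i / 2 * 'i = - 2^-1 :> C by rewrite mulrAC -expr2 sqrCi mulN1r.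
  rewrite /herm_part scalerA e scaleNr -scalerBr opprB [_ - Z]addrC addrACA subrr add0r.
  by rewrite scalerDr -scalerDl -[2^-1]mul1r -splitr scale1r.
by split; [rewrite Z_comb | rewrite Z'_comb]; apply: comm_comb; apply: MH.
Qed.

Variable l : nat.

Definition resolvent_fun (k : 'I_l) (b : bool) : ncfun R l :=
  fun n X => resolvent (herm_part b (X k)).
Arguments resolvent_fun : clear implicits.

Lemma resolvent_fun_compatible k b : compatible (resolvent_fun k b).
Proof.
move=> s p X U Uu; rewrite /resolvent_fun /mxact /mxtuple_dsum.
rewrite herm_part_unitary_conj // resolvent_unitary_conj ?herm_part_adj //.
by rewrite herm_part_mxdiag resolvent_mxdiag // => i; rewrite herm_part_adj.
Qed.

Lemma resolvent_fun_borel k b n : borel_fun (resolvent_fun k b n).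
Proof.
apply: ccontinuous_borel_fun; rewrite /resolvent_fun.
apply: mx_ccontinuous_inv; first by move=> M; rewrite shift_unitmx // herm_part_adj.
apply: mx_ccontinuousD; last exact: mx_ccontinuous_cst.
have Xc := @mx_ccontinuous_unrealify R l n k.
case: b; first by apply: mx_ccontinuousD => //; apply: mx_ccontinuous_adj.
apply: mx_ccontinuousZ; apply: mx_ccontinuousD => //.
by apply: mx_ccontinuousN; apply: mx_ccontinuous_adj.
Qed.

Lemma resolvent_fun_in_F K k b : in_F K (resolvent_fun k b).
Proof.
split; first exact: resolvent_fun_compatible.
split; first by move=> n; apply: resolvent_fun_borel.
have bound n X : opnorm_le (resolvent_fun k b n X) 1.
  by apply: resolvent_opnorm_le1; rewrite herm_part_adj.
by case: K => //; [move=> r _|]; exists 1.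
Qed.

End Resolvent.

Section Schur.
Variables (R : realType) (l : nat).
Local Notation C := R[i].

Lemma coisometry_reducing_not_irreducible n a b (e : (a + b = n)%N)
    (X : mxtuple R l n) (W : 'M[C]_(a + b, n)) :
  W *m adjmx W = 1%:M -> (0 < a)%N -> (0 < b)%N ->
  (forall k, usubmx W *m X k *m adjmx (dsubmx W) = 0) ->
  (forall k, dsubmx W *m X k *m adjmx (usubmx W) = 0) -> ~ irreducible X.
Proof.
case: n / e in X W *; move=> WW' a_gt0 b_gt0 ud du; apply.
have W'W : adjmx W *m W = 1%:M := mulmx1C WW'.
have W'u : unitarymx (adjmx W) by split; rewrite adjmxK.
exists a, b, (fun k => usubmx W *m X k *m adjmx (usubmx W)),
  (fun k => dsubmx W *m X k *m adjmx (dsubmx W)), (adjmx W), erefl.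
split => //; apply: funext => k; rewrite castmx_id unitary_invmx // adjmxK.
have -> : block_mx (usubmx W *m X k *m adjmx (usubmx W)) 0 0
                   (dsubmx W *m X k *m adjmx (dsubmx W)) = W *m X k *m adjmx W.
  by rewrite -[in RHS](vsubmxK W) adjmx_col mul_col_mx mul_col_row ud du.
by rewrite !mulmxA W'W mul1mx -mulmxA W'W mulmx1.
Qed.

Lemma schmidt_complete_coisometry n m (E : 'M[C]_(m, n)) :
  spectral.schmidt_complete E *m adjmx (spectral.schmidt_complete E) = 1%:M.
Proof.
rewrite adjmx_map_tr; apply/spectral.unitarymxP.
exact: spectral.schmidt_complete_unitarymx.
Qed.

Lemma schmidt_complete_stable_orth n m (E : 'M[C]_(m, n)) (Y : 'M[C]_n) :
  stablemx E Y ->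
  usubmx (spectral.schmidt_complete E) *m Y *m
    adjmx (dsubmx (spectral.schmidt_complete E)) = 0.
Proof.
move=> EY; rewrite /spectral.schmidt_complete col_mxKu col_mxKd adjmx_map_tr.
apply/spectral.orthomx1P.
rewrite (eqmxMr Y (spectral.eqmx_schmidt_free (row_base_free E))).
rewrite (eqmxMr Y (eq_row_base E)); apply: submx_trans EY _.
rewrite sesquilinear.orthomx_sym.
by rewrite (spectral.eqmx_schmidt_free (row_base_free _)) eq_row_base.
Qed.

(* An eigenspace E of M is invariant under every X_k and X_k^*, so the
   unitary built from orthonormal bases of E and E^perp splits X into two
   blocks unless E is the whole space. *)
Lemma irreducible_commutant_scalar n (X : mxtuple R l n) (M : 'M[C]_n) :
  irreducible X ->
  (forall k, M *m X k = X k *m M) ->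
  (forall k, M *m adjmx (X k) = adjmx (X k) *m M) -> exists c, M = c%:M.
Proof.
case: n X M => [|n] X M Xirr MX MX'; first by exists 0; apply/matrixP => [[]].
have [c c_eig] := spectral.eigenvalue_closed M (ltn0Sn n).
have [full|nfull] := boolP (row_full (eigenspace M c)).
  exists c; have : (1%:M <= eigenspace M c)%MS by rewrite submx_full.
  by move/sub_kermxP; rewrite mul1mx => /eqP; rewrite subr_eq0 => /eqP.
have EX k := comm_mx_stable_eigenspace c (MX k).
have EX' k := comm_mx_stable_eigenspace c (MX' k).
have E_neq0 : eigenspace M c != 0 by [].
apply: False_ind; move: (eigenspace M c) E_neq0 nfull EX EX' => E E_neq0 nfull EX EX'.
apply: (coisometry_reducing_not_irreducible (spectral.add_rank_ortho E)
  (schmidt_complete_coisometry E)) Xirr.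
- by rewrite lt0n mxrank_eq0.
- rewrite spectral.rank_ortho subn_gt0 ltn_neqAle rank_leq_col andbT.
  by move: nfull; rewrite /row_full.
- by move=> k; apply: schmidt_complete_stable_orth.
move=> k; rewrite -[X k]adjmxK -adjmx0 -(schmidt_complete_stable_orth (EX' k)).
by rewrite !adjmxM !adjmxK mulmxA.
Qed.

End Schur.

Section ReducibleTuples.
Variables (R : realType) (l : nat).
Local Notation C := R[i].

Lemma ncfun_castmx (f : ncfun R l) m m' (e : m = m') (Y : mxtuple R l m) :
  f m' (fun k => castmx (e, e) (Y k)) = castmx (e, e) (f m Y).
Proof. by case: m' / e. Qed.

Lemma compatible_block_mx (f : ncfun R l) n a b (A : mxtuple R l a)
    (B : mxtuple R l b) (U : 'M[C]_(a + b)) (e : (a + b = n)%N) :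
  compatible f -> unitarymx U ->
  f n (fun k => castmx (e, e) (U *m block_mx (A k) 0 0 (B k) *m invmx U)) =
  castmx (e, e) (U *m block_mx (f a A) 0 0 (f b B) *m invmx U).
Proof.
move=> fc Uu; pose e2 := dims2_sum a b.
pose AB := select2 (mxtuple R l) A B.
have := fc 2%N (dims2 a b) AB _ (castmx_unitary e2 Uu).
have -> : mxact (castmx (e2, e2) U) (mxtuple_dsum AB) =
    fun k => castmx (e2, e2) (U *m block_mx (A k) 0 0 (B k) *m invmx U).
  apply: funext => k; rewrite /mxact /mxtuple_dsum !castmx_mul castmx_invmx.
  congr (_ *m _ *m _); rewrite block_mx_mxdiag2; apply: eq_mxdiag => j.
  by rewrite /AB /select2 /dims2; case: (j == ord0).
have -> : mxdiag (fun j => f (dims2 a b j) (AB j)) =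
    castmx (e2, e2) (block_mx (f a A) 0 0 (f b B)).
  rewrite block_mx_mxdiag2; apply: eq_mxdiag => j.
  by rewrite /AB /select2 /dims2; case: (j == ord0).
rewrite -castmx_invmx -!castmx_mul => fAB.
pose e' := etrans (esym e2) e.
have -> : (fun k => castmx (e, e) (U *m block_mx (A k) 0 0 (B k) *m invmx U)) =
    fun k => castmx (e', e') (castmx (e2, e2) (U *m block_mx (A k) 0 0 (B k) *m invmx U)).
  by apply: funext => k; rewrite castmx_comp; congr castmx; congr pair; apply: eq_irrelevance.
rewrite ncfun_castmx fAB castmx_comp.
by congr castmx; congr pair; apply: eq_irrelevance.
Qed.

Lemma scalar_on_irreducible_commute (u v : ncfun R l) :
  compatible u -> compatible v ->
  (forall n (X : mxtuple R l n), irreducible X -> exists c : C, u n X = c%:M) ->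
  forall n (X : mxtuple R l n), u n X *m v n X = v n X *m u n X.
Proof.
move=> uc vc u_irr n; elim/ltn_ind: n => n IHn X.
have [Xirr|Xred] := pselect (irreducible X).
  by have [c ->] := u_irr n X Xirr; rewrite scalar_mxC.
move/contrapT: Xred => [a [b [A [B [U [e [a_gt0 b_gt0 Uu ->]]]]]]].
rewrite (compatible_block_mx A B e uc Uu) (compatible_block_mx A B e vc Uu).
rewrite -!castmx_mul; congr castmx.
have Uunit := unitary_unitmx Uu.
rewrite !mulmxA !mulmxKV // -!mulmxA; congr (_ *m _).
rewrite !mulmxA; congr (_ *m _).
rewrite !mulmx_block !mulmx0 !mul0mx !addr0 !add0r.
have a_lt : (a < n)%N by rewrite -e -{1}[a]addn0 ltn_add2l.
have b_lt : (b < n)%N by rewrite -e -{1}[b]add0n ltn_add2r.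
by rewrite (IHn a a_lt A) (IHn b b_lt B).
Qed.

End ReducibleTuples.

Theorem corollary2p6 (R : realType) (l : nat) (K : Fkind) (u : ncfun R l) :
  in_center K u <->
  (in_F K u /\
   forall (n : nat) (X : mxtuple R l n), irreducible X ->
     exists c : R[i], u n X = c%:M).
Proof.
split.
- move=> [uF u_central]; split => // n X Xirr.
  have comm_parts k b : u n X *m herm_part b (X k) = herm_part b (X k) *m u n X.
    apply: comm_resolvent; first exact: herm_part_adj.
    exact: u_central _ (@resolvent_fun_in_F R l K k b) n X.
  apply: (irreducible_commutant_scalar Xirr) => k.
    exact: (comm_herm_parts (comm_parts k)).1.
  exact: (comm_herm_parts (comm_parts k)).2.
- move=> [uF u_irr]; split => // v vF n X.
  exact: scalar_on_irreducible_commute uF.1 vF.1 u_irr n X.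
Qed.
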